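(* Let $c_{a,1}>0$ and $c_{c,1}>0$ be constants, let $r_{a,1}:(0,\infty)\to(0,\infty)$ be a positive, decreasing, at least twice continuously differentiable function, and let $r_{c,1}:(0,\infty)\to(0,\infty)$ be a positive, increasing, at least twice continuously differentiable function. Assume $$c_{a,1}\,r_{a,1}''(n)+c_{c,1}\,r_{c,1}''(n)>0\quad\text{for all } n\in(0,\infty),$$ and assume there exists $\bar n_1\in(0,\infty)$ such that $$c_{a,1}\,r_{a,1}'(\bar n_1)+c_{c,1}\,r_{c,1}'(\bar n_1)=0.$$ For each real budget $p\ge 2$ define $u_1:[1,p-1]\to(0,\infty)$, $u_1(n_1)=\frac{1}{p-n_1}\big(c_{a,1}r_{a,1}(n_1)+c_{c,1}r_{c,1}(n_1)\big)$, and let $n_1^*=n_1^*(p)$ be its unique global minimizer on $[1,p-1]$. Then $\bar n_1$ is unique, and for every budget $p$, $$n_1^*\le \max\{1,\bar n_1\},$$ a bound independent of $p$.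
   Context: Under the stated hypotheses, $u_1$ has a unique global minimizer on $[1,p-1]$ for every $p\ge 2$; $n_1^*$ denotes this minimizer. The functions $r_{a,1}$, $r_{c,1}$ model accuracy and evaluation-cost rates of a low-fidelity model trained with $n_1$ high-fidelity samples. *)

From Stdlib Require Import Reals.
From Coquelicot Require Import Coquelicot.
Open Scope R_scope.

Definition C2_pos (f : R -> R) : Prop :=
  forall x, 0 < x ->
    ex_derive f x /\ ex_derive (Derive f) x /\ continuous (Derive (Derive f)) x.

Definition pos_on_pos (f : R -> R) : Prop := forall x, 0 < x -> 0 < f x.

Definition decr_on_pos (f : R -> R) : Prop :=
  forall x y, 0 < x -> x <= y -> f y <= f x.
Definition incr_on_pos (f : R -> R) : Prop :=
  forall x y, 0 < x -> x <= y -> f x <= f y.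

Definition u1 (ca cc : R) (ra rc : R -> R) (p n : R) : R :=
  (ca * ra n + cc * rc n) / (p - n).

Definition is_global_min_u1 (ca cc : R) (ra rc : R -> R) (p n : R) : Prop :=
  1 <= n <= p - 1 /\
  forall m, 1 <= m <= p - 1 -> u1 ca cc ra rc p n <= u1 ca cc ra rc p m.

(** The derivative of the cost [g = c_a r_a + c_c r_c] is strictly increasing, since [g'' > 0];
    hence it has at most one zero [nbar] and is nonnegative on [[nbar, +oo)].  So [g] is
    nondecreasing beyond [m = max 1 nbar], while the denominator [p - n] of [u_1] strictly
    decreases: every [n > m] has [u_1(n) > u_1(m)], and a minimizer cannot exceed [m]. *)
From Stdlib Require Import Reals Lra.
From Coquelicot Require Import Coquelicot.
Open Scope R_scope.

Definition lin_comb (a b : R) (f g : R -> R) (x : R) : R := a * f x + b * g x.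

Lemma is_derive_lin_comb (a b : R) (f g : R -> R) (x : R) :
  ex_derive f x -> ex_derive g x ->
  is_derive (lin_comb a b f g) x (lin_comb a b (Derive f) (Derive g) x).
Proof.
  intros Df Dg.
  apply (is_derive_plus (fun y => a * f y) (fun y => b * g y));
    apply is_derive_scal; apply Derive_correct; assumption.
Qed.

Lemma lin_comb_pos (a b : R) (f g : R -> R) (x : R) :
  0 < a -> 0 < b -> 0 < f x -> 0 < g x -> 0 < lin_comb a b f g x.
Proof.
  intros Ha Hb Hf Hg. unfold lin_comb.
  pose proof (Rmult_lt_0_compat a (f x) Ha Hf).
  pose proof (Rmult_lt_0_compat b (g x) Hb Hg).
  lra.
Qed.

Section DerivativeOnPositiveReals.

Variables (f df : R -> R).
Hypothesis f_derive : forall x, 0 < x -> is_derive f x (df x).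

Lemma MVT_pos (a b : R) : 0 < a -> a < b ->
  exists c, a <= c <= b /\ f b - f a = df c * (b - a).
Proof.
  intros Ha Hab.
  destruct (MVT_gen f a b df) as [c [Hc Emvt]].
  - intros x Hx. apply f_derive. rewrite Rmin_left in Hx; lra.
  - intros x Hx. apply continuity_pt_filterlim.
    apply (ex_derive_continuous (K := R_AbsRing) (V := R_NormedModule)).
    exists (df x). apply f_derive. rewrite Rmin_left in Hx; lra.
  - exists c. rewrite Rmin_left, Rmax_right in Hc by lra. split; assumption.
Qed.

Lemma derive_pos_lt (a b : R) : 0 < a -> a < b ->
  (forall x, a <= x <= b -> 0 < df x) -> f a < f b.
Proof.
  intros Ha Hab Hdf.
  destruct (MVT_pos a b Ha Hab) as [c [Hc Emvt]].
  assert (0 < df c * (b - a)) by (apply Rmult_lt_0_compat; [apply Hdf |]; lra).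
  lra.
Qed.

Lemma derive_nonneg_le (a b : R) : 0 < a -> a <= b ->
  (forall x, a <= x <= b -> 0 <= df x) -> f a <= f b.
Proof.
  intros Ha Hab Hdf.
  destruct (Rle_lt_or_eq_dec a b Hab) as [Hlt | ->]; [| lra].
  destruct (MVT_pos a b Ha Hlt) as [c [Hc Emvt]].
  assert (0 <= df c * (b - a)) by (apply Rmult_le_pos; [apply Hdf |]; lra).
  lra.
Qed.

End DerivativeOnPositiveReals.

Section StrictlyIncreasing.

Variable f : R -> R.
Hypothesis f_lt : forall a b, 0 < a -> a < b -> f a < f b.

Lemma strict_incr_zero_unique (x y : R) :
  0 < x -> 0 < y -> f x = 0 -> f y = 0 -> x = y.
Proof.
  intros Hx Hy Ex Ey.
  destruct (Rtotal_order x y) as [h | [h | h]]; [| assumption |].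
  - pose proof (f_lt x y Hx h). lra.
  - pose proof (f_lt y x Hy h). lra.
Qed.

Lemma strict_incr_nonneg_after_zero (z x : R) :
  0 < z -> f z = 0 -> z <= x -> 0 <= f x.
Proof.
  intros Hz Ez Hzx.
  destruct (Rle_lt_or_eq_dec z x Hzx) as [h | <-]; [| lra].
  pose proof (f_lt z x Hz h). lra.
Qed.

End StrictlyIncreasing.

Lemma Rdiv_lt_compat (a b q r : R) :
  0 < a -> a <= b -> 0 < q -> q < r -> a / r < b / q.
Proof.
  intros Ha Hab Hq Hqr.
  apply Rlt_le_trans with (a / q).
  - unfold Rdiv. apply Rmult_lt_compat_l; [assumption |].
    apply Rinv_lt_contravar; [apply Rmult_lt_0_compat |]; lra.
  - unfold Rdiv. apply Rmult_le_compat_r; [left; apply Rinv_0_lt_compat |]; lra.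
Qed.

Theorem proposition2 (ca cc : R) (ra rc : R -> R) (nbar : R) :
  0 < ca -> 0 < cc ->
  pos_on_pos ra -> decr_on_pos ra -> C2_pos ra ->
  pos_on_pos rc -> incr_on_pos rc -> C2_pos rc ->
  (forall n, 0 < n ->
     ca * Derive (Derive ra) n + cc * Derive (Derive rc) n > 0) ->
  0 < nbar ->
  ca * Derive ra nbar + cc * Derive rc nbar = 0 ->
  (forall m, 0 < m -> ca * Derive ra m + cc * Derive rc m = 0 -> m = nbar) /\
  (forall p nstar, 2 <= p ->
     is_global_min_u1 ca cc ra rc p nstar ->
     nstar <= Rmax 1 nbar).
Proof.
  intros Hca Hcc Pa _ Ca Pc _ Cc Hconvex Hnbar Hcrit.
  set (g := lin_comb ca cc ra rc).
  set (dg := lin_comb ca cc (Derive ra) (Derive rc)).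
  assert (g_derive : forall x, 0 < x -> is_derive g x (dg x)).
  { intros x Hx. apply is_derive_lin_comb; [apply Ca | apply Cc]; assumption. }
  assert (dg_derive : forall x, 0 < x ->
            is_derive dg x (lin_comb ca cc (Derive (Derive ra)) (Derive (Derive rc)) x)).
  { intros x Hx. apply is_derive_lin_comb; [apply Ca | apply Cc]; assumption. }
  assert (dg_lt : forall a b, 0 < a -> a < b -> dg a < dg b).
  { intros a b Ha Hab. apply (derive_pos_lt dg _ dg_derive); [assumption | assumption |].
    intros x Hx. apply Rlt_gt, Hconvex. lra. }
  split.
  - intros m Hm Em. exact (strict_incr_zero_unique dg dg_lt m nbar Hm Hnbar Em Hcrit).
  - intros p nstar _ [Hnstar Hmin].
    set (m := Rmax 1 nbar).
    assert (Hm1 : 1 <= m) by apply Rmax_l.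
    assert (Hm2 : nbar <= m) by apply Rmax_r.
    destruct (Rle_or_lt nstar m) as [Hle | Hgt]; [assumption | exfalso].
    assert (g_le : g m <= g nstar).
    { apply (derive_nonneg_le g dg g_derive); [lra | lra |].
      intros x Hx. apply (strict_incr_nonneg_after_zero dg dg_lt nbar x Hnbar Hcrit); lra. }
    assert (g_pos : 0 < g m).
    { apply lin_comb_pos; [assumption | assumption | apply Pa | apply Pc]; lra. }
    pose proof (Hmin m ltac:(lra)) as Hu.
    pose proof (Rdiv_lt_compat (g m) (g nstar) (p - nstar) (p - m)
                  g_pos g_le ltac:(lra) ltac:(lra)).
    change (g nstar / (p - nstar) <= g m / (p - m)) in Hu.
    lra.
Qed.
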